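(* Let $\ell\ge2$, $R_0^*\in SO(3)$, $(y_i,x_i)$ with $y_i=R_0^*x_i+\epsilon_i$ ($i=1,\dots,\ell$), $c_1^2,\dots,c_\ell^2\ge0$, and $\hat w_0\in\mathbb{S}^3$ a global minimizer of (TLS-Q). Let $\zeta=\lambda_{\min2}(\sum_{i=1}^\ell Q_i)/\lambda_{\min}(\sum_{i=1}^\ell Q_i)$ and assume $\zeta\ge\ell/(\ell-1)$ and, for every $i$, $$c_i^2>\hat w_0^\top Q_i\hat w_0+\|Q_i\hat w_0\|_2+\frac{|d_i|+d_i}{2},\quad d_i:=\frac{\sum_{k=1}^\ell\hat w_0^\top Q_k\hat w_0}{\ell}-\hat w_0^\top Q_i\hat w_0+\frac{\lambda_{\max}\big(\sum_{j\ne i}(Q_i-Q_j)\big)}{\zeta(\ell-1)}.$$ Let $\hat V_0\in\mathbb{R}^{4\times3}$ satisfy $\hat V_0^\top\hat w_0=0$, $\hat V_0^\top\hat V_0=I_3$, and $\hat V=[\hat V_0,\ \hat w_0]\in\mathbb{R}^{4\times4}$. Define $$\hat T_i:=\frac{\zeta-\frac{\ell}{\ell-1}}{\zeta}\hat V_0^\top Q_i\hat V_0+\frac{\sum_{j=1}^\ell\hat V_0^\top Q_j\hat V_0}{\zeta(\ell-1)}-\frac{\sum_{k=1}^\ell\hat w_0^\top Q_k\hat w_0}{\ell}I_3,\qquad \hat S_i:=\hat V\begin{bmatrix}\hat T_i&0\\0&0\end{bmatrix}\hat V^\top .$$ Then $\sum_{i=1}^\ell\hat S_i=\sum_{i=1}^\ell\big(Q_i-(\hat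 w_0^\top Q_i\hat w_0)I_4\big)$, $\hat S_i\succeq0$ for every $i$, and $\hat S_i+c_i^2I_4-Q_i\succ0$ for every $i$.
   Context: For $w=[w_1;w_2;w_3;w_4]\in\mathbb{S}^3$, $R(w)=\begin{bmatrix} w_1^2+w_2^2-w_3^2-w_4^2 & 2(w_2w_3-w_1w_4) & 2(w_2w_4+w_1w_3)\\ 2(w_2w_3+w_1w_4) & w_1^2+w_3^2-w_2^2-w_4^2 & 2(w_3w_4-w_1w_2)\\ 2(w_2w_4-w_1w_3) & 2(w_3w_4+w_1w_2) & w_1^2+w_4^2-w_2^2-w_3^2\end{bmatrix}\in SO(3)$. $Q_i$ is the unique symmetric $4\times4$ matrix with $w^\top Q_iw=\|y_i-R(w)x_i\|_2^2$ for all $w\in\mathbb{S}^3$. (TLS-Q) is $\min_{w_0\in\mathbb{S}^3}\sum_{i=1}^\ell\min\{w_0^\top Q_iw_0,c_i^2\}$. $\lambda_{\min},\lambda_{\min2},\lambda_{\max}$ denote smallest, second smallest (with multiplicity), largest eigenvalue. *)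

From Stdlib Require Import ClassicalEpsilon.
From mathcomp Require Import all_boot all_order all_algebra.
From mathcomp Require Import reals.
Set Implicit Arguments. Unset Strict Implicit. Unset Printing Implicit Defensive.
Import Order.TTheory GRing.Theory Num.Theory.
Local Open Scope ring_scope.

Section Defs.
Variable R : realType.

(* the rotation matrix R(w) of a quaternion w = [w1;w2;w3;w4] (indices 0..3) *)
Definition rotq (w : 'cV[R]_4) : 'M[R]_3 :=
  let w1 := w 0 0 in let w2 := w 1 0 in let w3 := w 2 0 in let w4 := w 3 0 in
  \matrix_(i < 3, j < 3) nth 0 (nth [::]
   [:: [:: w1^+2 + w2^+2 - w3^+2 - w4^+2; 2 * (w2*w3 - w1*w4); 2 * (w2*w4 + w1*w3)];
       [:: 2 * (w2*w3 + w1*w4); w1^+2 + w3^+2 - w2^+2 - w4^+2; 2 * (w3*w4 - w1*w2)];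
       [:: 2 * (w2*w4 - w1*w3); 2 * (w3*w4 + w1*w2); w1^+2 + w4^+2 - w2^+2 - w3^+2]] i) j.

Definition qf n (A : 'M[R]_n) (v : 'cV[R]_n) : R := (v^T *m A *m v) 0 0.

Definition sqnorm n (v : 'cV[R]_n) : R := \sum_i v i 0 ^+ 2.
Definition norm2 n (v : 'cV[R]_n) : R := Num.sqrt (sqnorm v).

Definition unit_sphere n (v : 'cV[R]_n) : Prop := sqnorm v = 1.

Definition sym_mx n (A : 'M[R]_n) : Prop := A^T = A.

Definition SO3 (M : 'M[R]_3) : Prop := M^T *m M = 1%:M /\ \det M = 1.

Definition psd n (A : 'M[R]_n) : Prop := sym_mx A /\ forall v, 0 <= qf A v.
Definition pd n (A : 'M[R]_n) : Prop := sym_mx A /\ forall v, v != 0 -> 0 < qf A v.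

(* the eigenvalues of A, counted with multiplicity, sorted nondecreasingly:
   the (unique) sorted s with char_poly A = prod_(x <- s) (X - x); this exists
   for sym_mx real matrices. *)
Definition eigs n (A : 'M[R]_n) : seq R :=
  epsilon (inhabits [::])
    (fun s : seq R => sorted <=%R s /\ char_poly A = \prod_(x <- s) ('X - x%:P)).

Definition lambda_min n (A : 'M[R]_n) : R := nth 0 (eigs A) 0.
Definition lambda_min2 n (A : 'M[R]_n) : R := nth 0 (eigs A) 1.
Definition lambda_max n (A : 'M[R]_n) : R := last 0 (eigs A).

Definition tlsq_obj l (Q : 'I_l -> 'M[R]_4) (c2 : 'I_l -> R) (w : 'cV[R]_4) : R :=
  \sum_i Num.min (qf (Q i) w) (c2 i).

End Defs.

From mathcomp Require Import all_boot all_order all_algebra.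
From mathcomp Require Import reals.
From Stdlib Require Import ClassicalEpsilon.
From mathcomp Require Import complex ring lra.
Import Order.TTheory GRing.Theory Num.Theory.
Local Open Scope ring_scope.

Set Implicit Arguments. Unset Strict Implicit. Unset Printing Implicit Defensive.

(* Since c_i^2 exceeds w0' Q_i w0, no term of the TLS objective is truncated at w0, so w0
   minimises w' A w on the sphere, A = sum_i Q_i: it is an eigenvector of A for
   mu = lambda_min A = sum_i w0' Q_i w0.  In the orthonormal frame [V0, w0], A is block
   diagonal with blocks V0' A V0 and mu, hence lambda_min2 A = lambda_min (V0' A V0) = zeta mu.
   The certificate S_i = V0 T_i V0' then sums to V0 (V0' A V0 - mu) V0' = A - mu I.  It is
   psd because the share (V0' A V0) / (zeta (l - 1)) alone dominates the shift mu / l.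
   Writing v = V0 u + s w0, the quadratic form of S_i + c_i^2 I - Q_i is bounded below by
   alpha |u|^2 + beta s^2: the cross term is absorbed by ||Q_i w0|| (|u|^2 + s^2), and
   alpha, beta > 0 are the two margins encoded in the hypothesis on c_i^2. *)

Lemma char_poly_similar (F : comUnitRingType) n (P P' B : 'M[F]_n) :
  P' *m P = 1%:M -> char_poly (P' *m B *m P) = char_poly B.
Proof.
move=> P'P; rewrite /char_poly /char_poly_mx.
set mP := map_mx polyC P; set mP' := map_mx polyC P'.
have mP'P : mP' *m mP = 1%:M by rewrite -map_mxM P'P map_mx1.
have mPP' : mP *m mP' = 1%:M by apply: mulmx1C.
have conjX : ('X%:M : 'M_n) = mP' *m 'X%:M *m mP.
  by rewrite -mulmxA -scalar_mxC mulmxA mP'P mul1mx.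
rewrite {1}conjX !map_mxM -/mP -/mP' -mulmxBl -mulmxBr !det_mulmx mulrC mulrA.
by rewrite -det_mulmx mPP' det1 mul1r.
Qed.

Section SortedExtrema.
Variables (disp : Order.disp_t) (T : porderType disp) (x0 : T).
Implicit Types (s : seq T) (x : T).

Lemma sorted_head_le s x : sorted <=%O s -> x \in s -> (nth x0 s 0 <= x)%O.
Proof.
move=> s_sorted xs; rewrite -(nth_index x0 xs).
by apply: (sorted_leq_nth le_trans lexx) => //; rewrite inE ?index_mem //; case: s xs {s_sorted}.
Qed.

Lemma sorted_le_last s x : sorted <=%O s -> x \in s -> (x <= last x0 s)%O.
Proof.
move=> s_sorted xs; rewrite -(nth_index x0 xs) -nth_last.
have s_gt0 : (0 < size s)%N by case: s xs {s_sorted}.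
apply: (sorted_leq_nth le_trans lexx) => //; rewrite ?inE ?index_mem ?prednK //.
by rewrite -ltnS prednK // index_mem.
Qed.

End SortedExtrema.

Section QuadraticForms.
Variable R : realType.
Implicit Types (n : nat).

Definition bform n (A : 'M[R]_n) (u v : 'cV[R]_n) : R := (u^T *m A *m v) 0 0.

Lemma qfD n (A B : 'M[R]_n) v : qf (A + B) v = qf A v + qf B v.
Proof. by rewrite /qf mulmxDr mulmxDl mxE. Qed.

Lemma qfZ n (A : 'M[R]_n) a v : qf (a *: A) v = a * qf A v.
Proof. by rewrite /qf -scalemxAr -scalemxAl mxE. Qed.

Lemma qfN n (A : 'M[R]_n) v : qf (- A) v = - qf A v.
Proof. by rewrite -scaleN1r qfZ mulN1r. Qed.

Lemma qfB n (A B : 'M[R]_n) v : qf (A - B) v = qf A v - qf B v.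
Proof. by rewrite qfD qfN. Qed.

Lemma qf0 n (v : 'cV[R]_n) : qf 0 v = 0.
Proof. by rewrite /qf mulmx0 mul0mx mxE. Qed.

Lemma qf_sum n I (r : seq I) (P : pred I) (F : I -> 'M[R]_n) v :
  qf (\sum_(i <- r | P i) F i) v = \sum_(i <- r | P i) qf (F i) v.
Proof. by elim/big_rec2: _ => [|i x y _ <-]; rewrite ?qf0 ?qfD. Qed.

Lemma qf1 n (v : 'cV[R]_n) : qf 1%:M v = sqnorm v.
Proof. by rewrite /qf mulmx1 /sqnorm mxE; apply: eq_bigr => i _; rewrite mxE expr2. Qed.

Lemma qf_mulmx m n (A : 'M[R]_n) (M : 'M[R]_(n, m)) u :
  qf (M^T *m A *m M) u = qf A (M *m u).
Proof. by rewrite /qf trmx_mul !mulmxA. Qed.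

Lemma qf_scale n (A : 'M[R]_n) a v : qf A (a *: v) = a ^+ 2 * qf A v.
Proof. by rewrite /qf [(a *: v)^T]linearZ -!scalemxAl -scalemxAr !mxE mulrA -expr2. Qed.

Lemma bformZl n (A : 'M[R]_n) a u v : bform A (a *: u) v = a * bform A u v.
Proof. by rewrite /bform [(a *: u)^T]linearZ -!scalemxAl mxE. Qed.

Lemma bformZr n (A : 'M[R]_n) a u v : bform A u (a *: v) = a * bform A u v.
Proof. by rewrite /bform -scalemxAr mxE. Qed.

Lemma qf_add n (A : 'M[R]_n) u v : sym_mx A ->
  qf A (u + v) = qf A u + 2 * bform A u v + qf A v.
Proof.
move=> symA; have bformC : v^T *m A *m u = u^T *m A *m v.
  by rewrite [LHS]mx11_scalar -tr_scalar_mx -mx11_scalar !trmx_mul trmxK symA mulmxA.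
rewrite /qf /bform [(u + v)^T]linearD !mulmxDl !mulmxDr bformC !mxE; ring.
Qed.

Lemma sqnorm_ge0 n (v : 'cV[R]_n) : 0 <= sqnorm v.
Proof. by apply: sumr_ge0 => i _; rewrite sqr_ge0. Qed.

Lemma sqnorm_eq0 n (v : 'cV[R]_n) : (sqnorm v == 0) = (v == 0).
Proof.
apply/idP/eqP => [|->]; last by rewrite /sqnorm big1 // => i _; rewrite mxE expr0n.
rewrite psumr_eq0 => [/allP v0|i _]; last by rewrite sqr_ge0.
apply/matrixP => i j; rewrite (ord1 j) mxE; apply/eqP.
by rewrite -sqrf_eq0; apply: (implyP (v0 i (mem_index_enum _))).
Qed.

Lemma sqnorm_gt0 n (v : 'cV[R]_n) : (0 < sqnorm v) = (v != 0).
Proof. by rewrite lt_def sqnorm_ge0 sqnorm_eq0 andbT. Qed.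

Lemma sphere_qf_ge n (A : 'M[R]_n) c :
  (forall w, unit_sphere w -> c <= qf A w) -> forall v, c * sqnorm v <= qf A v.
Proof.
move=> Asph v; have [->|v0] := eqVneq v 0.
  by rewrite -qf1 /qf !mulmx0 !mxE mulr0.
have nv_gt0 : 0 < sqnorm v by rewrite sqnorm_gt0.
set r := Num.sqrt (sqnorm v); have r_gt0 : 0 < r by rewrite sqrtr_gt0.
have r2 : r ^+ 2 = sqnorm v by rewrite sqr_sqrtr ?ltW.
have := Asph (r^-1 *: v); rewrite qf_scale exprVn r2 ler_pdivlMl // mulrC; apply.
by rewrite /unit_sphere -qf1 qf_scale qf1 exprVn r2 mulVf ?gt_eqF.
Qed.

Lemma psd_qf_eq0 n (A : 'M[R]_n) w : psd A -> qf A w = 0 -> A *m w = 0.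
Proof.
move=> [symA A_ge0] Aw0; set u := A *m w; apply/eqP; rewrite -sqnorm_eq0.
have bform_uw : bform A u w = sqnorm u by rewrite -qf1 /qf /bform mulmx1 -mulmxA.
set b := sqnorm u; set c := qf A u.
have b_ge0 : 0 <= b := sqnorm_ge0 u; have c_ge0 : 0 <= c := A_ge0 u.
(* the quadratic form at -b u + (c + 1) w equals -b^2 (c + 2) *)
have := A_ge0 ((- b) *: u + (c + 1) *: w).
rewrite qf_add // !qf_scale bformZl bformZr bform_uw Aw0 -/b -/c => h.
by rewrite eq_le b_ge0 andbT; nra.
Qed.

Lemma dot_le_norm2 n (p z : 'cV[R]_n) s :
  2 * s * (p^T *m z) 0 0 <= norm2 z * (sqnorm p + s ^+ 2).
Proof.
set N := norm2 z; have N_ge0 : 0 <= N by apply: sqrtr_ge0.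
have N2 : N ^+ 2 = sqnorm z by rewrite sqr_sqrtr // sqnorm_ge0.
have [N0|N_neq0] := eqVneq N 0.
  have /eqP -> : z == 0 by rewrite -sqnorm_eq0 -N2 N0 expr0n.
  by rewrite mulmx0 mxE N0 mulr0 mul0r.
have N_gt0 : 0 < N by rewrite lt_def N_neq0.
have := sqnorm_ge0 (N *: p + (- s) *: z).
rewrite -qf1 qf_add; last exact: trmx1.
rewrite !qf_scale bformZl /bform mulmx1 -scalemxAr mxE.
rewrite !qf1 -N2 sqrrN; set X := (p^T *m z) 0 0; set Y := sqnorm p => h.
have : 0 <= N * (N * Y - 2 * s * X + N * s ^+ 2) by nra.
by rewrite pmulr_rge0 // => h2; nra.
Qed.

End QuadraticForms.

Section SymmetricEigenvalues.
Variable R : realType.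
Local Notation C := (complex R).
Local Notation toC := (real_complex R).
Local Open Scope sesquilinear_scope.
Variables (n : nat) (A : 'M[R]_n).
Hypothesis symA : sym_mx A.

Let Ac : 'M[C]_n := map_mx toC A.

Let Ac_herm : Ac \is hermsymmx.
Proof.
apply/is_hermitianmxP; rewrite expr0 scale1r; apply/matrixP=> i j; rewrite !mxE.
have -> : A j i = A i j by rewrite -{1}symA mxE.
by rewrite conj_Creal // complex_real.
Qed.

Let P := spectralmx Ac.
Let D := spectral_diag Ac.
Let r (k : 'I_n) : R := complex.Re (D 0 k).

Let Ac_diag : Ac = invmx P *m diag_mx D *m P.
Proof. exact/orthomx_spectralP/hermitian_normalmx/Ac_herm. Qed.

Let D_real k : D 0 k = (r k)%:C%C.
Proof.
have := hermitian_spectral_diag_real Ac_herm => /mxOverP /(_ 0 k).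
by rewrite /r; case: (D 0 k) => a b; rewrite complex_real => /eqP ->.
Qed.

Let char_poly_r : char_poly A = \prod_(k < n) ('X - (r k)%:P).
Proof.
apply: (map_poly_inj toC).
rewrite map_char_poly -/Ac Ac_diag char_poly_similar ?mulVmx ?spectral_unit //.
rewrite char_poly_trig ?diag_mx_is_trig // rmorph_prod.
by apply: eq_bigr => k _; rewrite /= map_polyXsubC mxE eqxx mulr1n D_real.
Qed.

Lemma eigsP : sorted <=%R (eigs A) /\ char_poly A = \prod_(x <- eigs A) ('X - x%:P).
Proof.
apply: (epsilon_spec (inhabits [::])
  (fun s : seq R => sorted <=%R s /\ char_poly A = \prod_(x <- s) ('X - x%:P))).
exists (sort <=%R [seq r k | k <- enum 'I_n]); split.
  exact: (sort_sorted (@le_total _ R)).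
by rewrite char_poly_r (perm_big _ (permEl (perm_sort _ _))) /= big_map big_enum.
Qed.

Let r_in_eigs k : r k \in eigs A.
Proof.
have /perm_mem -> : perm_eq (eigs A) [seq r k | k <- enum 'I_n].
  by apply: prod_XsubC_eq; rewrite -(proj2 eigsP) char_poly_r big_map big_enum.
by apply: map_f; rewrite mem_enum.
Qed.

Let qf_spectral (v : 'cV[R]_n) : let y := P *m map_mx toC v in
  toC (qf A v) = \sum_k (r k)%:C%C * ((y k 0)^* * y k 0) /\
  toC (sqnorm v) = \sum_k (y k 0)^* * y k 0.
Proof.
move=> y; have PtP : P ^t* *m P = 1%:M.
  by apply: mulmx1C; apply/unitarymxP; apply: spectral_unitarymx.
set vc := map_mx toC v.
have vcT : vc^T *m P ^t* = y ^t*.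
  rewrite /y trmx_mul map_mxM; congr (_ *m _).
  by apply/matrixP => i j; rewrite !mxE; symmetry; apply/CrealP; rewrite complex_real.
split.
  have -> : toC (qf A v) = (vc^T *m Ac *m vc) 0 0 by rewrite /vc /Ac map_trmx -!map_mxM mxE.
  rewrite Ac_diag invmx_unitary ?spectral_unitarymx // !mulmxA vcT.
  rewrite -[_ *m P *m vc]mulmxA -/y; clearbody y; rewrite mul_mx_diag mxE.
  by apply: eq_bigr => k _; rewrite !mxE D_real mulrCA mulrA.
have -> : toC (sqnorm v) = (vc^T *m vc) 0 0.
  by rewrite /sqnorm mxE rmorph_sum; apply: eq_bigr => k _; rewrite !mxE rmorphXn expr2.
rewrite -(mulmx1 vc^T) -PtP !mulmxA vcT -mulmxA -/y; clearbody y; rewrite mxE.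
by apply: eq_bigr => k _; rewrite !mxE.
Qed.

Lemma lambda_min_qf_le v : lambda_min A * sqnorm v <= qf A v.
Proof.
have [qfE sqnormE] := qf_spectral v; rewrite -lecR qfE rmorphM /= sqnormE mulr_sumr.
apply: ler_sum => k _; apply: ler_wpM2r; first by rewrite mulrC mul_conjC_ge0.
by rewrite lecR; apply: sorted_head_le (proj1 eigsP) (r_in_eigs k).
Qed.

Lemma qf_le_lambda_max v : qf A v <= lambda_max A * sqnorm v.
Proof.
have [qfE sqnormE] := qf_spectral v; rewrite -lecR qfE rmorphM /= sqnormE mulr_sumr.
apply: ler_sum => k _; apply: ler_wpM2r; first by rewrite mulrC mul_conjC_ge0.
by rewrite lecR; apply: sorted_le_last (proj1 eigsP) (r_in_eigs k).
Qed.

Lemma eigs_eigenvector x : x \in eigs A -> exists2 v : 'cV[R]_n, v != 0 & A *m v = x *: v.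
Proof.
move=> x_eig; have : eigenvalue A x.
  by rewrite eigenvalue_root_char (proj2 eigsP) root_prod_XsubC.
case/eigenvalueP => u uA u0; exists u^T; first by rewrite trmx_eq0.
by rewrite -symA -trmx_mul uA linearZ.
Qed.

End SymmetricEigenvalues.

Lemma qf_min_eigenvector (R : realType) n (A : 'M[R]_n) mu w : sym_mx A ->
  (forall v, mu * sqnorm v <= qf A v) -> qf A w = mu * sqnorm w -> A *m w = mu *: w.
Proof.
move=> symA mu_min Aw; have qf_shift v : qf (A - mu%:M) v = qf A v - mu * sqnorm v.
  by rewrite qfB -scalemx1 qfZ qf1.
apply/eqP; rewrite -subr_eq0 -mul_scalar_mx -mulmxBl; apply/eqP/psd_qf_eq0.
  split=> [|v]; last by rewrite qf_shift subr_ge0.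
  by rewrite /sym_mx linearB /= symA tr_scalar_mx.
by rewrite qf_shift Aw subrr.
Qed.

Section OrthonormalFrame.
Variable R : realType.
Variables (m : nat) (V0 : 'M[R]_(m + 1, m)) (w : 'cV[R]_(m + 1)).
Hypotheses (V0_orthonormal : V0^T *m V0 = 1%:M) (V0w : V0^T *m w = 0).
Hypothesis w_unit : unit_sphere w.

Local Notation V := (row_mx V0 w : 'M[R]_(m + 1)).

Let wTw : w^T *m w = 1%:M.
Proof.
have : qf 1%:M w = 1 by rewrite qf1.
by rewrite /qf mulmx1 => w1; apply/matrixP => i j; rewrite !ord1 w1 mxE.
Qed.

Let wTV0 : w^T *m V0 = 0.
Proof. by rewrite -[LHS]trmxK trmx_mul trmxK V0w trmx0. Qed.

Lemma frame_mul_trmx : V *m V^T = 1%:M.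
Proof.
apply: mulmx1C.
by rewrite tr_row_mx mul_col_row V0_orthonormal V0w wTV0 wTw scalar_mx_block.
Qed.

Lemma frame_proj : V0 *m V0^T + w *m w^T = 1%:M.
Proof. by rewrite -frame_mul_trmx tr_row_mx mul_row_col. Qed.

Lemma sqnorm_frame u : sqnorm (V0 *m u) = sqnorm u.
Proof. by rewrite -!qf1 -qf_mulmx mulmx1 V0_orthonormal. Qed.

Lemma frame_block_mx (T : 'M[R]_m) :
  V *m block_mx T 0 0 (0 : 'M_1) *m V^T = V0 *m T *m V0^T.
Proof. by rewrite mul_row_block !mulmx0 !addr0 tr_row_mx mul_row_col mul0mx addr0. Qed.

Lemma frame_decomp v : v = V0 *m (V0^T *m v) + (w^T *m v) 0 0 *: w.
Proof.
rewrite -{1}(mul1mx v) -frame_proj mulmxDl -!mulmxA.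
by rewrite {1}[w^T *m v]mx11_scalar mul_mx_scalar.
Qed.

Lemma qf_frame_decomp (B : 'M[R]_(m + 1)) v : sym_mx B ->
  qf B v = qf B (V0 *m (V0^T *m v)) + 2 * (w^T *m v) 0 0 * bform B (V0 *m (V0^T *m v)) w
           + (w^T *m v) 0 0 ^+ 2 * qf B w.
Proof. by move=> symB; rewrite {1}(frame_decomp v) qf_add // qf_scale bformZr mulrA. Qed.

Lemma sqnorm_frame_decomp v :
  sqnorm v = sqnorm (V0^T *m v) + (w^T *m v) 0 0 ^+ 2.
Proof.
rewrite -qf1 qf_frame_decomp; last exact: trmx1.
by rewrite /bform mulmx1 trmx_mul -mulmxA V0w mulmx0 !qf1 sqnorm_frame w_unit
  [(0 : 'M_1) 0 0]mxE mulr0 mulr1 addr0.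
Qed.

Variables (A : 'M[R]_(m + 1)) (mu : R).
Hypotheses (symA : sym_mx A) (Aw : A *m w = mu *: w).

Let wTA : w^T *m A = mu *: w^T.
Proof. by rewrite -symA -trmx_mul Aw linearZ. Qed.

Lemma frame_diag : V^T *m A *m V = block_mx (V0^T *m A *m V0) 0 0 mu%:M.
Proof.
rewrite tr_row_mx mul_col_mx mul_col_row -!mulmxA Aw -!scalemxAr V0w wTw.
by rewrite !mulmxA wTA -!scalemxAl wTV0 !scaler0 scalemx1.
Qed.

Lemma frame_compress : V0 *m (V0^T *m A *m V0 - mu%:M) *m V0^T = A - mu%:M.
Proof.
set W := w *m w^T; have V0V0T : V0 *m V0^T = 1%:M - W by rewrite -frame_proj addrK.
have WA : W *m A = mu *: W by rewrite -mulmxA wTA -scalemxAr.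
have AW : A *m W = mu *: W by rewrite mulmxA Aw -scalemxAl.
have WW : W *m W = W by rewrite mulmxA -(mulmxA w) wTw mulmx1.
rewrite mulmxBr mulmxBl mul_mx_scalar -scalemxAl !mulmxA -(mulmxA (V0 *m V0^T *m A)).
rewrite V0V0T !(mulmxBl, mulmxBr) mul1mx mulmx1 WA AW mulmx1 -scalemxAl WW.
by rewrite subrr subr0 scalerBr scalemx1 opprB addrA subrK.
Qed.

Hypothesis mu_min : forall v, mu * sqnorm v <= qf A v.

Lemma eigs_frame : eigs A = mu :: eigs (V0^T *m A *m V0).
Proof.
set B := V0^T *m A *m V0.
have symB : sym_mx B by rewrite /sym_mx !trmx_mul trmxK symA mulmxA.
have char_polyA : char_poly A = char_poly B * ('X - mu%:P).
  have VTV : V^T *m V = 1%:M by apply: mulmx1C; apply: frame_mul_trmx.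
  rewrite -(char_poly_similar A VTV) frame_diag.
  by rewrite /char_poly char_block_diag_mx det_ublock det_mx11 !mxE eqxx mulr1n.
have mu_le_eigsB x : x \in eigs B -> mu <= x.
  move=> /(eigs_eigenvector symB) [u u_neq0 Bu].
  have qfBu : qf B u = x * sqnorm u.
    by rewrite -qf1 /qf -mulmxA Bu -scalemxAr mulmx1 mxE.
  have : mu * sqnorm u <= x * sqnorm u.
    by rewrite -qfBu qf_mulmx -(sqnorm_frame u); apply: mu_min.
  by rewrite ler_pM2r // sqnorm_gt0.
have [sortedA char_polyAE] := eigsP symA; have [sortedB char_polyBE] := eigsP symB.
apply: le_sorted_eq => //.
  by rewrite /= (path_sortedE le_trans) sortedB andbT; apply/allP.
by apply: prod_XsubC_eq; rewrite -char_polyAE char_polyA char_polyBE big_cons mulrC.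
Qed.

End OrthonormalFrame.

Lemma tlsq_minimizer_qf_ge (R : realType) l (Q : 'I_l -> 'M[R]_4) (c2 : 'I_l -> R) w0 :
  (forall i, qf (Q i) w0 <= c2 i) ->
  (forall w, unit_sphere w -> tlsq_obj Q c2 w0 <= tlsq_obj Q c2 w) ->
  forall v, (\sum_i qf (Q i) w0) * sqnorm v <= qf (\sum_i Q i) v.
Proof.
move=> w0_inliers w0_min; apply: sphere_qf_ge => w w_unit.
have <- : tlsq_obj Q c2 w0 = \sum_i qf (Q i) w0.
  by apply: eq_bigr => i _; rewrite min_l.
apply: le_trans (w0_min w w_unit) _; rewrite qf_sum; apply: ler_sum => i _.
by rewrite ge_min lexx.
Qed.

Section Certificate.
Variable R : realType.
Variables (m l : nat) (Q : 'I_l -> 'M[R]_(m + 1)).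
Variables (w : 'cV[R]_(m + 1)) (V0 : 'M[R]_(m + 1, m)).
Hypotheses (V0_orthonormal : V0^T *m V0 = 1%:M) (V0w : V0^T *m w = 0).
Hypothesis w_unit : unit_sphere w.
Hypothesis symQ : forall i, sym_mx (Q i).
Hypothesis Q_ge0 : forall i v, 0 <= qf (Q i) v.

Let A := \sum_i Q i.
Let mu := \sum_i qf (Q i) w.
Hypothesis Aw : A *m w = mu *: w.

Variables (a b avg : R).

Definition cert_T i : 'M[R]_m :=
  a *: (V0^T *m Q i *m V0) + b *: (\sum_j V0^T *m Q j *m V0) - avg *: 1%:M.

Definition cert_S i : 'M[R]_(m + 1) :=
  row_mx V0 w *m block_mx (cert_T i) 0 0 (0 : 'M_1) *m (row_mx V0 w)^T.

Let sum_compress : \sum_j V0^T *m Q j *m V0 = V0^T *m A *m V0.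
Proof. by rewrite /A mulmx_sumr mulmx_suml. Qed.

Let symA : sym_mx A.
Proof. by rewrite /sym_mx linear_sum; apply: eq_bigr => i _; apply: symQ. Qed.

Lemma qf_cert_S i v : qf (cert_S i) v = qf (cert_T i) (V0^T *m v).
Proof. by rewrite /cert_S frame_block_mx // -qf_mulmx trmxK. Qed.

Lemma qf_cert_T i u : qf (cert_T i) u =
  a * qf (Q i) (V0 *m u) + b * qf A (V0 *m u) - avg * sqnorm u.
Proof. by rewrite /cert_T qfB qfD !qfZ sum_compress qf1 !qf_mulmx. Qed.

Lemma sym_cert_S i : sym_mx (cert_S i).
Proof.
rewrite /sym_mx /cert_S frame_block_mx // !trmx_mul trmxK mulmxA; congr (_ *m _ *m _).
rewrite /cert_T sum_compress linearB linearD !linearZ /= !trmx_mul trmxK symA (symQ i).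
by rewrite trmx1 !mulmxA.
Qed.

Lemma sum_cert_S : a = 1 - b *+ l -> avg *+ l = mu ->
  \sum_i cert_S i = \sum_i (Q i - qf (Q i) w *: 1%:M).
Proof.
move=> a_def avg_def; rewrite (eq_bigr _ (fun i _ => frame_block_mx V0 w (cert_T i))).
rewrite -mulmx_suml -mulmx_sumr /cert_T sumrB big_split /= -scaler_sumr !sumr_const card_ord.
rewrite sum_compress !scalerMnl -scalerDl a_def subrK scale1r avg_def scalemx1.
rewrite (frame_compress V0_orthonormal V0w w_unit symA Aw).
by rewrite big_split /= sumrN -scaler_suml scalemx1.
Qed.

Lemma cert_S_psd i : 0 <= a -> 0 <= b -> avg <= b * lambda_min (V0^T *m A *m V0) ->
  psd (cert_S i).
Proof.
move=> a_ge0 b_ge0 avg_le; split=> [|v]; first exact: sym_cert_S.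
rewrite qf_cert_S qf_cert_T; set u := V0^T *m v.
have qfA_ge : lambda_min (V0^T *m A *m V0) * sqnorm u <= qf A (V0 *m u).
  by rewrite -qf_mulmx; apply: lambda_min_qf_le; rewrite /sym_mx !trmx_mul trmxK symA mulmxA.
have := mulr_ge0 a_ge0 (Q_ge0 i (V0 *m u)); have := ler_wpM2l b_ge0 qfA_ge.
have := ler_wpM2r (sqnorm_ge0 u) avg_le; rewrite mulrA; lra.
Qed.

Lemma qf_sum_sub i v :
  qf (\sum_(j | j != i) (Q i - Q j)) v = l%:R * qf (Q i) v - qf A v.
Proof.
have l_gt0 : (0 < l)%N := leq_ltn_trans (leq0n i) (ltn_ord i).
rewrite /A !qf_sum [X in _ - X](bigD1 i) //=; under eq_bigr do rewrite qfB.
rewrite sumrB sumr_const cardC1 card_ord mulr_natl.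
have -> : qf (Q i) v *+ l = qf (Q i) v *+ l.-1 + qf (Q i) v by rewrite -mulrSr prednK.
lra.
Qed.

Lemma qf_cert_margin_ge i c v : a = 1 - b *+ l -> 0 <= b ->
  (c - avg - lambda_max (\sum_(j | j != i) (Q i - Q j)) * b - norm2 (Q i *m w))
    * sqnorm (V0^T *m v)
  + (c - qf (Q i) w - norm2 (Q i *m w)) * (w^T *m v) 0 0 ^+ 2
  <= qf (cert_S i + c *: 1%:M - Q i) v.
Proof.
move=> a_def b_ge0; set M := \sum_(j | j != i) (Q i - Q j).
set u := V0^T *m v; set p := V0 *m u; set s := (w^T *m v) 0 0.
have symM : sym_mx M.
  by rewrite /sym_mx linear_sum; apply: eq_bigr => j _; rewrite linearB /= !symQ.
have sqnorm_p : sqnorm p = sqnorm u by apply: sqnorm_frame.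
have qfM_le : qf M p <= lambda_max M * sqnorm u.
  by rewrite -sqnorm_p; apply: qf_le_lambda_max.
have := ler_wpM2l b_ge0 qfM_le; rewrite qf_sum_sub.
have := dot_le_norm2 p (Q i *m w) s; rewrite sqnorm_p.
rewrite qfB qfD qfZ qf1 qf_cert_S qf_cert_T -/u -/p a_def.
rewrite (sqnorm_frame_decomp V0_orthonormal V0w w_unit).
rewrite (qf_frame_decomp V0_orthonormal V0w w_unit v (symQ i)).
by rewrite -/u -/p -/s /bform -mulmxA -mulr_natl; lra.
Qed.

Lemma cert_S_pd i c : a = 1 - b *+ l -> 0 <= b ->
  qf (Q i) w + norm2 (Q i *m w) < c ->
  avg + lambda_max (\sum_(j | j != i) (Q i - Q j)) * b + norm2 (Q i *m w) < c ->
  pd (cert_S i + c *: 1%:M - Q i).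
Proof.
move=> a_def b_ge0 c_gt1 c_gt2; split.
  by rewrite /sym_mx linearB linearD linearZ /= sym_cert_S trmx1 symQ.
move=> v v_neq0; apply: lt_le_trans (qf_cert_margin_ge i c v a_def b_ge0).
have : 0 < sqnorm (V0^T *m v) + (w^T *m v) 0 0 ^+ 2.
  by rewrite -sqnorm_frame_decomp // sqnorm_gt0.
have := sqr_ge0 ((w^T *m v) 0 0); set s2 := _ ^+ 2 => s2_ge0.
move: (sqnorm_ge0 (V0^T *m v)); set U := sqnorm _.
by rewrite le_eqVlt => /predU1P [<-|U_gt0] pos; nra.
Qed.

End Certificate.

Lemma cert_weights (R : realType) l (zeta : R) : (2 <= l)%N -> l%:R / (l%:R - 1) <= zeta ->
  let a := (zeta - l%:R / (l%:R - 1)) / zeta in let b := (zeta * (l%:R - 1))^-1 in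
  [/\ 0 < zeta, 0 <= a, 0 <= b, a = 1 - b *+ l
    & forall mu, 0 <= mu -> mu / l%:R <= b * (zeta * mu)].
Proof.
move=> l_ge2 zeta_ge a b; have l_gt1 : 1 < l%:R :> R by rewrite ltr1n.
have zeta_gt0 : 0 < zeta by apply: lt_le_trans zeta_ge; rewrite divr_gt0 ?subr_gt0; lra.
have b_gt0 : 0 < b by rewrite invr_gt0 mulr_gt0 ?subr_gt0.
split=> // [|||mu mu_ge0].
- by rewrite divr_ge0 ?subr_ge0 // ltW.
- exact: ltW.
- by rewrite /a /b -mulr_natl; field; rewrite !gt_eqF ?subr_gt0.
have -> : b * (zeta * mu) = mu / (l%:R - 1) by rewrite /b; field; rewrite !gt_eqF ?subr_gt0.
by rewrite ler_wpM2l // lef_pV2 ?posrE ?subr_gt0; lra.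
Qed.

Unset Implicit Arguments.

Theorem lemma3p8 (R : realType) (l : nat) (hl : (2 <= l)%N)
  (R0 : 'M[R]_3) (hR0 : SO3 R0)
  (y x eps : 'I_l -> 'cV[R]_3) (hyx : forall i, y i = R0 *m x i + eps i)
  (Q : 'I_l -> 'M[R]_4)
  (hQsym : forall i, sym_mx (Q i))
  (hQ : forall i (w : 'cV[R]_4), unit_sphere w ->
          qf (Q i) w = sqnorm (y i - rotq w *m x i))
  (c2 : 'I_l -> R) (hc2 : forall i, 0 <= c2 i)
  (w0 : 'cV[R]_4) (hw0 : unit_sphere w0)
  (hmin : forall w : 'cV[R]_4, unit_sphere w -> tlsq_obj Q c2 w0 <= tlsq_obj Q c2 w) :
  let zeta := lambda_min2 (\sum_i Q i) / lambda_min (\sum_i Q i) in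
  let avg := (\sum_k qf (Q k) w0) / l%:R in
  let d := fun i => avg - qf (Q i) w0
              + lambda_max (\sum_(j | j != i) (Q i - Q j)) / (zeta * (l%:R - 1)) in
  l%:R / (l%:R - 1) <= zeta ->
  (forall i, qf (Q i) w0 + norm2 (Q i *m w0) + (`|d i| + d i) / 2 < c2 i) ->
  forall V0 : 'M[R]_(4, 3), V0^T *m w0 = 0 -> V0^T *m V0 = 1%:M ->
  let V : 'M[R]_4 := row_mx V0 w0 in
  let T := fun i => ((zeta - l%:R / (l%:R - 1)) / zeta) *: (V0^T *m Q i *m V0)
              + (zeta * (l%:R - 1))^-1 *: (\sum_j V0^T *m Q j *m V0)
              - avg *: (1%:M : 'M[R]_3) in
  let S := fun i => V *m (block_mx (T i) 0 0 (0 : 'M[R]_1) : 'M[R]_4) *m V^T in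
  [/\ \sum_i S i = \sum_i (Q i - qf (Q i) w0 *: 1%:M),
      forall i, psd (S i)
    & forall i, pd (S i + c2 i *: 1%:M - Q i)].
Proof.
(* The registration data R0, y, x, eps only matter through hQ, which makes each Q i psd. *)
move=> zeta avg d zeta_ge c2_gt V0 V0w V0_orthonormal V T S.
set A := \sum_i Q i; set mu := \sum_i qf (Q i) w0.
have Q_ge0 i v : 0 <= qf (Q i) v.
  by rewrite -(mul0r (sqnorm v)); apply: sphere_qf_ge => w w_unit; rewrite hQ ?sqnorm_ge0.
have c2_gt' i : qf (Q i) w0 + norm2 (Q i *m w0) < c2 i /\
    avg + lambda_max (\sum_(j | j != i) (Q i - Q j)) / (zeta * (l%:R - 1))
      + norm2 (Q i *m w0) < c2 i.
  by have := c2_gt i; have := ler_norm (d i); have := ler_norm (- d i); rewrite normrN /d; lra.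
have symA : sym_mx A by rewrite /sym_mx linear_sum; apply: eq_bigr => i _; apply: hQsym.
have mu_min : forall v, mu * sqnorm v <= qf A v.
  apply: tlsq_minimizer_qf_ge hmin => i; have [+ _] := c2_gt' i.
  by have := sqrtr_ge0 (sqnorm (Q i *m w0)); rewrite /norm2; lra.
have Aw0 : A *m w0 = mu *: w0.
  by apply: qf_min_eigenvector => //; rewrite /A qf_sum hw0 mulr1.
set B := V0^T *m A *m V0.
have zetaE : zeta = lambda_min B / mu.
  have eigsA := eigs_frame (m := 3) V0_orthonormal V0w hw0 symA Aw0 mu_min.
  by rewrite /zeta /lambda_min2 /lambda_min eigsA.
have [zeta_gt0 a_ge0 b_ge0 a_def avg_le] := cert_weights hl zeta_ge.
have mu_gt0 : 0 < mu.
  rewrite lt_def sumr_ge0 ?andbT //; apply: contraTneq zeta_gt0 => mu0.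
  by rewrite zetaE mu0 invr0 mulr0 ltxx.
have avg_mu : avg *+ l = mu by rewrite /avg -mulr_natr mulfVK // pnatr_eq0 -lt0n ltnW.
split=> [|i|i].
- exact: (sum_cert_S (m := 3) V0_orthonormal V0w hw0 hQsym Aw0 a_def avg_mu).
- apply: (cert_S_psd (m := 3) w0 hQsym Q_ge0 i a_ge0 b_ge0).
  have -> : lambda_min B = zeta * mu by rewrite zetaE mulfVK ?gt_eqF.
  exact/avg_le/ltW.
- have [c2_gt1 c2_gt2] := c2_gt' i.
  exact: (cert_S_pd (m := 3) V0_orthonormal V0w hw0 hQsym a_def b_ge0 c2_gt1 c2_gt2).
Qed.
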